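(* Let $X$ be a topological space. If $1\in\mathrm{MG}(X)$, then $X$ is metrizable (i.e. $\mathrm{Met}(X;\mathbb{R})\ne\emptyset$).
   Context: A linearly ordered Abelian group is an Abelian group with a linear order compatible with addition. For $x,y\in G_{>0}$, $x\asymp y$ iff $y\le nx$ and $x\le my$ for some $n,m\in\mathbb{Z}_{\ge1}$; $\mathrm{Arc}(G)=G_{>0}/\asymp$ (linearly ordered by $[x]\preceq[y]$ iff ($nx<y$ for all $n$) or $x\asymp y$), and $\mathrm{Arc}(G)^\perp$ is $\mathrm{Arc}(G)$ with a new least element adjoined. For a bottomed linearly ordered set $S$ with least element $\perp_S$, $S^*=S\setminus\{\perp_S\}$, the character $\chi(S)$ is the least cardinal $\kappa>0$ such that some strictly decreasing family $(s_\alpha)_{\alpha<\kappa}$ in $S^*$ has every $t\in S^*$ bounded below by some $s_\alpha$. A $G$-metric on $X$ is $d\colon X^2\to G$ with $d(x,y)=0\iff x=y$, $d\ge0$, symmetric, triangle inequality, topology via open balls of radii in $G_{>0}$; $\mathrm{Met}(X;G)$ is the set of $G$-metrics generating the topology of $X$. A cardinal $\kappa$ is in $\mathrm{MG}(X)$ iff some linearly ordered Abelian group $G$ with $\chi(\mathrm{Arc}(G)^\perp)=\kappa$ has $\mathrm{Met}(X;G)\ne\emptyset$. *)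

From HB Require Import structures.
From mathcomp Require Import all_boot all_order all_algebra.
From mathcomp Require Import classical_sets reals topology.

Set Implicit Arguments.
Unset Strict Implicit.
Unset Printing Implicit Defensive.

Import Order.TTheory GRing.Theory Num.Theory.
Local Open Scope ring_scope.
Local Open Scope classical_set_scope.

Definition LOAG (G : zmodType) (le : G -> G -> Prop) : Prop :=
  [/\ (forall x, le x x),
      (forall x y, le x y -> le y x -> x = y),
      (forall x y z, le x y -> le y z -> le x z),
      (forall x y, le x y \/ le y x)
    & (forall x y z, le x y -> le (x + z) (y + z))].

Definition glt (G : zmodType) (le : G -> G -> Prop) (x y : G) : Prop :=
  le x y /\ x <> y.

Definition arch_eq (G : zmodType) (le : G -> G -> Prop) (x y : G) : Prop :=
  exists n m : nat, (0 < n)%N /\ (0 < m)%N /\ le y (x *+ n) /\ le x (y *+ m).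

Definition arch_class (G : zmodType) (le : G -> G -> Prop) (x : G) : set G :=
  [set y | glt le 0 y /\ arch_eq le x y].

(* Arc(G) = G_{>0} / ~ , its elements being the equivalence classes. *)
Definition Arc (G : zmodType) (le : G -> G -> Prop) : Type :=
  {A : set G | exists x, glt le 0 x /\ A = arch_class le x}.

Definition arc_le (G : zmodType) (le : G -> G -> Prop) (A B : Arc le) : Prop :=
  exists x y, proj1_sig A x /\ proj1_sig B y /\
    ((forall n : nat, (0 < n)%N -> glt le (x *+ n) y) \/ arch_eq le x y).

(* Arc(G)^perp : Arc(G) with a new least element (None) adjoined. *)
Definition ArcBot (G : zmodType) (le : G -> G -> Prop) : Type := option (Arc le).

Definition arcbot_le (G : zmodType) (le : G -> G -> Prop)
    (a b : ArcBot le) : Prop :=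
  match a, b with
  | None, _ => True
  | Some _, None => False
  | Some A, Some B => arc_le A B
  end.

Definition char_family (S : Type) (le : S -> S -> Prop) (bot : S) (k : nat)
  : Prop :=
  exists s : 'I_k -> S,
    (forall a, s a <> bot) /\
    (forall a b : 'I_k, (a < b)%N -> le (s b) (s a) /\ s b <> s a) /\
    (forall t, t <> bot -> exists a, le (s a) t).

(* chi(S) = k for a finite cardinal k: k is the least cardinal > 0 admitting
   such a family.  (Any cardinal smaller than a finite one is finite, so only
   finite cardinals need to be compared.) *)
Definition char_eq_nat (S : Type) (le : S -> S -> Prop) (bot : S) (k : nat)
  : Prop :=
  [/\ (0 < k)%N, char_family le bot k
    & forall m : nat, (0 < m)%N -> (m < k)%N -> ~ char_family le bot m].

Definition is_Gmetric (X : Type) (G : zmodType) (le : G -> G -> Prop)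
    (d : X -> X -> G) : Prop :=
  [/\ (forall x y, d x y = 0 <-> x = y),
      (forall x y, le 0 (d x y)),
      (forall x y, d x y = d y x)
    & (forall x y z, le (d x z) (d x y + d y z))].

Definition Gball (X : Type) (G : zmodType) (le : G -> G -> Prop)
    (d : X -> X -> G) (x : X) (r : G) : set X :=
  [set y | glt le (d x y) r].

Definition Met (X : topologicalType) (G : zmodType) (le : G -> G -> Prop)
    (d : X -> X -> G) : Prop :=
  is_Gmetric le d /\
  (forall U : set X,
     open U <-> (forall x, U x -> exists r, glt le 0 r /\ Gball le d x r `<=` U)).

Definition in_MG_nat (X : topologicalType) (k : nat) : Prop :=
  exists (G : zmodType) (le : G -> G -> Prop),
    [/\ LOAG le,
        char_eq_nat (@arcbot_le G le) None k
      & exists d : X -> X -> G, Met le d].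

(* Since chi(Arc(G)^perp) = 1, Arc(G) has a least class [a]: every g > 0
   satisfies a <= N g for some N.  Measuring g against a,
   gauge g = inf ({1} U {p/q | q g <= p a}) is subadditive and vanishes exactly
   at 0, so gauge o d is a real metric.  As gauge w < 1/N forces w < g whenever
   a <= N g, real balls lie inside G-balls.  Conversely, either G has a least
   positive element, and both topologies are discrete, or every positive
   element can be halved, so for each n some h > 0 has n h <= a and the G-ball
   of radius h lies in the real ball of radius 1/n. *)

From mathcomp Require Import all_boot all_order all_algebra.
From mathcomp Require Import classical_sets reals topology.
From Stdlib Require Import Classical.
From mathcomp Require Import ring lra.

Set Implicit Arguments.
Unset Strict Implicit.
Unset Printing Implicit Defensive.
Import Order.TTheory GRing.Theory Num.Theory.
Local Open Scope ring_scope.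
Local Open Scope classical_set_scope.

Section LinearlyOrderedGroup.
Variables (G : zmodType) (le : G -> G -> Prop).
Hypothesis leG : LOAG le.

Lemma loag_addl x y z : le x y -> le (z + x) (z + y).
Proof. by case: leG => _ _ _ _ addr lexy; rewrite ![z + _]addrC; apply: addr. Qed.

Lemma loag_add2 x y u v : le x y -> le u v -> le (x + u) (y + v).
Proof.
case: leG => _ _ trans _ addr lexy leuv.
by apply: (trans _ (y + u)); [apply: addr | apply: loag_addl].
Qed.

Lemma loag_muln2 x y n : le x y -> le (x *+ n) (y *+ n).
Proof.
move=> lexy; elim: n => [|n IHn]; first by rewrite !mulr0n; case: leG.
by rewrite !mulrS; apply: loag_add2.
Qed.

Lemma loag_muln_ge0 x n : le 0 x -> le 0 (x *+ n).
Proof. by move/(loag_muln2 n); rewrite mul0rn. Qed.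

Lemma loag_mulnr x m n : le 0 x -> (m <= n)%N -> le (x *+ m) (x *+ n).
Proof.
move=> x_ge0 lemn; rewrite -(subnKC lemn) mulrnDr.
by have := loag_addl (x *+ m) (loag_muln_ge0 (n - m) x_ge0); rewrite addr0.
Qed.

Lemma loag_muln_trans x y z m n :
  le x (y *+ m) -> le y (z *+ n) -> le x (z *+ (n * m)).
Proof.
case: leG => _ _ trans _ _ lexy leyz; rewrite mulrnA.
exact: trans lexy (loag_muln2 m leyz).
Qed.

Lemma glt_le_asym x y : glt le x y -> ~ le y x.
Proof. by case: leG => _ anti _ _ _ [lexy neq] leyx; apply/neq/anti. Qed.

Lemma loag_not_glt x y : ~ glt le x y -> le y x.
Proof.
case: leG => refl _ _ total _ nlt; case: (total x y) => // lexy.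
by case: (classic (x = y)) => [-> | neq]; [apply: refl | case: nlt].
Qed.

Lemma glt_addl x y z : glt le x y -> glt le (z + x) (z + y).
Proof. by case=> lexy neq; split; [apply: loag_addl | move/addrI]. Qed.

Lemma glt_mulSn x n : glt le 0 x -> glt le 0 (x *+ n.+1).
Proof.
case: leG => _ anti _ _ _ [x_ge0 x_neq0]; split; first exact: loag_muln_ge0.
rewrite mulrS => sum0; apply: x_neq0; apply: anti => //.
by have := loag_addl x (loag_muln_ge0 n x_ge0); rewrite addr0 sum0.
Qed.

Lemma glt_mulnr x m n : glt le 0 x -> (m < n)%N -> glt le (x *+ m) (x *+ n).
Proof.
move=> x_gt0 ltmn; have := glt_addl (x *+ m) (glt_mulSn (n - m.+1) x_gt0).
by rewrite addr0 -mulrnDr -addSnnS subnKC.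
Qed.

Lemma loag_mulnr_cancel x m n : glt le 0 x -> le (x *+ m) (x *+ n) -> (m <= n)%N.
Proof.
move=> x_gt0 lemn; rewrite leqNgt; apply/negP => /(glt_mulnr x_gt0) ltnm.
exact: glt_le_asym ltnm lemn.
Qed.

Lemma loag_least_pos_or_halving :
  (exists2 m, glt le 0 m & forall h, glt le 0 h -> le m h) \/
  (forall g, glt le 0 g -> exists2 h, glt le 0 h & le (h *+ 2) g).
Proof.
case: (classic (exists2 m, glt le 0 m & forall h, glt le 0 h -> le m h));
  [by left | move=> no_least; right => g g_gt0].
have [h h_gt0 nlegh] : exists2 h, glt le 0 h & ~ le g h.
  apply: NNPP => no_h; apply: no_least; exists g => // h h_gt0.
  by apply: NNPP => nlegh; apply: no_h; exists h.
have [refl _ _ total _] := leG.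
have lthg : glt le h g.
  split; first by case: (total g h).
  by move=> eqhg; apply: nlegh; rewrite eqhg; apply: refl.
have gh_gt0 : glt le 0 (g - h) by have := glt_addl (- h) lthg; rewrite addNr addrC.
case: (total h (g - h)) => [legh | lehg].
  exists h => //; have := loag_addl h legh.
  by rewrite [h + (g - h)]addrC subrK mulr2n.
by exists (g - h) => //; have := loag_addl (g - h) lehg; rewrite subrK mulr2n.
Qed.

Lemma loag_halving_small_multiple :
  (forall g, glt le 0 g -> exists2 h, glt le 0 h & le (h *+ 2) g) ->
  forall a n, glt le 0 a -> exists2 h, glt le 0 h & le (h *+ n) a.
Proof.
move=> halving a n a_gt0.
have [h h_gt0 leha] : exists2 h, glt le 0 h & le (h *+ 2 ^ n) a.
  elim: n => [|n [h h_gt0 leha]].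
    by exists a => //; rewrite expn0 mulr1n; case: leG.
  have [h' h'_gt0 leh'h] := halving h h_gt0.
  exists h' => //; case: leG => _ _ trans _ _; rewrite expnS mulrnA.
  exact: trans (loag_muln2 _ leh'h) leha.
exists h => //; case: leG => _ _ trans _ _; apply: trans leha.
by apply: loag_mulnr (ltnW (ltn_expl n (ltnSn 1))); case: h_gt0.
Qed.

Lemma char1_least_arc_class :
  char_eq_nat (@arcbot_le G le) None 1 ->
  exists2 a, glt le 0 a & forall g, glt le 0 g -> exists N, le a (g *+ N.+1).
Proof.
case=> _ [s [s_neq_bot [_ s_least]]] _.
case E: (s ord0) => [[A [a [a_gt0 eA]]] |]; last by case: (s_neq_bot ord0).
exists a => // g g_gt0.
pose B : Arc le := exist _ (arch_class le g) (ex_intro _ g (conj g_gt0 erefl)).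
have [i] := s_least (Some B) ltac:(discriminate).
rewrite (ord1 i) E => -[x [y [Ax [[_ [n [_ [_ [_ [leyg _]]]]]] lexy]]]].
move: Ax => /=; rewrite eA => -[_ [_ [m [_ [_ [_ leax]]]]]].
have [k lexy'] : exists k, le x (y *+ k).
  case: lexy => [ltxy | [_ [k [_ [_ [_ lexyk]]]]]]; last by exists k.
  by exists 1%N; have [] := ltxy 1%N isT; rewrite !mulr1n.
exists (n * (k * m))%N; case: leG => _ _ trans _ _.
apply: trans (loag_muln_trans (loag_muln_trans leax lexy') leyg) _.
by apply: loag_mulnr; [exact: g_gt0.1 | apply: leqnSn].
Qed.

End LinearlyOrderedGroup.

Lemma glt_ler {R : numDomainType} {x y : R} :
  glt (fun u v : R => u <= v) x y <-> x < y.
Proof. by rewrite lt_neqAle; split=> [[-> /eqP ->] | /andP [/eqP ? ?]]. Qed.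

Section Gauge.
Variables (G : zmodType) (le : G -> G -> Prop) (R : realType) (a : G).
Hypothesis leG : LOAG le.

(* The element 1 keeps the set nonempty when g is infinitely larger than a;
   it caps the gauge at 1. *)
Definition gauge_set (g : G) : set R :=
  [set r | r = 1 \/ exists p q : nat,
     (0 < q)%N /\ le (g *+ q) (a *+ p) /\ r = p%:R / q%:R].

Definition gauge (g : G) : R := inf (gauge_set g).

Lemma gauge_set_ge0 g r : gauge_set g r -> 0 <= r.
Proof. by case=> [-> | [p [q [_ [_ ->]]]]] //; apply: divr_ge0. Qed.

Lemma gauge_le g r : gauge_set g r -> gauge g <= r.
Proof. by apply: ge_inf; exists 0 => s /gauge_set_ge0. Qed.

Lemma gauge_ge0 g : 0 <= gauge g.
Proof. by apply: lb_le_inf => [|r /gauge_set_ge0 //]; exists 1; left. Qed.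

Lemma gauge_lt g c : gauge g < c -> exists2 r, gauge_set g r & r < c.
Proof. by apply: inf_lt; exists 1; left. Qed.

Lemma gauge0 : gauge 0 = 0.
Proof.
apply/eqP; rewrite eq_le gauge_ge0 andbT; apply: gauge_le; right.
by exists 0%N, 1%N; rewrite mul0rn mulr0n mul0r; case: leG.
Qed.

Lemma gauge_le_inv w n : (0 < n)%N -> le (w *+ n) a -> gauge w <= n%:R^-1.
Proof.
by move=> n_gt0 lewa; rewrite -div1r; apply: gauge_le; right; exists 1%N, n.
Qed.

Lemma gauge_set_add w g h r s :
  le w (g + h) -> gauge_set g r -> gauge_set h s -> gauge w <= r + s.
Proof.
move=> lew gr hs; have s_ge0 := gauge_set_ge0 hs.
have gauge_le1 : gauge w <= 1 by apply: gauge_le; left.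
case: gr => [-> | [p [q [q_gt0 [legq ->]]]]].
  by apply: le_trans gauge_le1 _; rewrite lerDl.
case: hs => [-> | [p' [q' [q'_gt0 [lehq' ->]]]]].
  by apply: le_trans gauge_le1 _; rewrite lerDr divr_ge0.
apply: gauge_le; right; exists (p * q' + p' * q)%N, (q * q')%N; split.
  by rewrite muln_gt0 q_gt0.
split; last by rewrite natrD !natrM; field; rewrite !pnatr_eq0 -!lt0n q_gt0 q'_gt0.
case: leG => _ _ trans _ _; apply: (trans _ _ _ (loag_muln2 leG (q * q') lew)).
have legq' : le (g *+ (q * q')) (a *+ (p * q')).
  by rewrite !mulrnA; apply: loag_muln2.
have lehq : le (h *+ (q * q')) (a *+ (p' * q)).
  by rewrite [(q * q')%N]mulnC !mulrnA; apply: loag_muln2.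
by rewrite mulrnDl mulrnDr; apply: loag_add2.
Qed.

Lemma gauge_subadd w g h : le w (g + h) -> gauge w <= gauge g + gauge h.
Proof.
move=> lew; apply/ler_addgt0Pr => e e_gt0.
have [r gr ltr] := @gauge_lt g (gauge g + e / 2) ltac:(lra).
have [s hs lts] := @gauge_lt h (gauge h + e / 2) ltac:(lra).
by have := gauge_set_add lew gr hs; lra.
Qed.

Lemma gauge_lt_inv_glt w g N :
  glt le 0 g -> le a (g *+ N.+1) -> gauge w < N.+1%:R^-1 -> glt le w g.
Proof.
move=> g_gt0 leag /gauge_lt [r [-> | [p [q [q_gt0 [lewq ->]]]]]].
  by rewrite invf_gt1 ?ltr0n // ltrn1.
rewrite ltr_pdivrMr ?ltr0n // mulrC ltr_pdivlMr ?ltr0n // -natrM ltr_nat => ltpq.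
apply: NNPP => /(loag_not_glt leG) legw; case: leG => _ _ trans _ _.
have := trans _ _ _ (loag_muln2 leG q legw) (loag_muln_trans leG lewq leag).
by move/(loag_mulnr_cancel leG g_gt0); rewrite leqNgt mulnC ltpq.
Qed.

Lemma gauge_gt0 g N : glt le 0 g -> le a (g *+ N.+1) -> 0 < gauge g.
Proof.
move=> g_gt0 leag; apply: (@lt_le_trans _ _ N.+1%:R^-1).
  by rewrite invr_gt0 ltr0n.
by rewrite leNgt; apply/negP => /(gauge_lt_inv_glt g_gt0 leag) [].
Qed.

End Gauge.

Section GaugeMetric.
Variables (X : topologicalType) (G : zmodType) (le : G -> G -> Prop).
Variables (R : realType) (a : G) (d : X -> X -> G).
Hypotheses (leG : LOAG le) (a_gt0 : glt le 0 a).
Hypothesis a_least : forall g, glt le 0 g -> exists N, le a (g *+ N.+1).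

Local Notation dR := (fun x y => gauge le R a (d x y)).

Lemma gauge_Gmetric : is_Gmetric le d -> is_Gmetric (fun u v : R => u <= v) dR.
Proof.
case=> d0 d_ge0 dC dtri; split=> [x y | x y | x y | x y z].
- split=> [gauge_dxy0 | ->]; last by rewrite (proj2 (d0 y y) erefl) (gauge0 R a leG).
  apply: NNPP => neq; have dxy_gt0 : glt le 0 (d x y) by split=> // /esym/d0.
  have [N leaN] := a_least dxy_gt0.
  by have := gauge_gt0 R leG dxy_gt0 leaN; rewrite gauge_dxy0 ltxx.
- exact: gauge_ge0.
- by rewrite dC.
- exact: (gauge_subadd R a leG (dtri x y z)).
Qed.

Lemma gauge_ball_sub_Gball x r : glt le 0 r ->
  exists2 e : R, 0 < e & Gball (fun u v : R => u <= v) dR x e `<=` Gball le d x r.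
Proof.
move=> r_gt0; have [N leaN] := a_least r_gt0.
exists N.+1%:R^-1; first by rewrite invr_gt0 ltr0n.
by move=> y /glt_ler /(gauge_lt_inv_glt leG r_gt0 leaN).
Qed.

Lemma Gball_sub_gauge_ball x (e : R) : is_Gmetric le d -> 0 < e ->
  exists2 r, glt le 0 r & Gball le d x r `<=` Gball (fun u v : R => u <= v) dR x e.
Proof.
case=> d0 d_ge0 _ _ e_gt0.
case: (loag_least_pos_or_halving leG) => [[m m_gt0 m_least] | halving].
  exists m => // y ltdm; apply/glt_ler.
  suff -> : d x y = 0 by rewrite (gauge0 R a leG).
  apply: NNPP => neq; apply: (glt_le_asym leG ltdm); apply: m_least.
  by split=> // /esym.
pose n := Num.Def.archi_bound e^-1.
have lt_inv_e_n : e^-1 < n%:R by apply: archi_boundP; rewrite invr_ge0 ltW.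
have n_gt0 : (0 < n)%N.
  by rewrite -(ltr0n R); apply: le_lt_trans lt_inv_e_n; rewrite invr_ge0 ltW.
have [h h_gt0 lehn] := loag_halving_small_multiple leG halving n a_gt0.
exists h => // y [ledh _]; apply/glt_ler; have [_ _ trans _ _] := leG.
have ledn := trans _ _ _ (loag_muln2 leG n ledh) lehn.
apply: le_lt_trans (gauge_le_inv R n_gt0 ledn) _.
by rewrite invf_plt ?posrE ?ltr0n.
Qed.

Lemma gauge_Met : Met le d -> Met (fun u v : R => u <= v) dR.
Proof.
case=> dG dtop; split; first exact: gauge_Gmetric.
move=> U; rewrite dtop; split=> Uball x /Uball [r [r_gt0 sub]].
- have [e e_gt0 sube] := gauge_ball_sub_Gball x r_gt0.
  by exists e; split; [apply/glt_ler | apply: subset_trans sub].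
- have [r' r'_gt0 sub'] := Gball_sub_gauge_ball x dG (glt_ler.1 r_gt0).
  by exists r'; split; last apply: subset_trans sub.
Qed.

End GaugeMetric.

Theorem proposition2p45 (X : topologicalType) :
  in_MG_nat X 1 ->
  forall R : realType, exists d : X -> X -> R, Met (fun a b : R => (a <= b)%R) d.
Proof.
move=> [G [le [leG char1 [d dMet]]]] R.
have [a a_gt0 a_least] := char1_least_arc_class leG char1.
by exists (fun x y => gauge le R a (d x y)); apply: gauge_Met.
Qed.
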